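(* Let $(M,\cdot,1)$ be a monoid, $\Sigma$ a finite alphabet, and $A=(Q,\Sigma,u,i_u,\delta,w,\rho)$ an accessible $M$-DFA. If there do not exist words $\alpha,\beta\in\Sigma^*$, an $M$-language $\ell'$ and elements $m,m'\in M$ such that $u\alpha\neq u\beta$, $\Delta_\alpha(\mathcal{A})=m\cdot\ell'$ and $\Delta_\beta(\mathcal{A})=m'\cdot\ell'$, then $A$ is minimal.
   Context: An $M$-language is a function $\Sigma^*\to M$; $(m\cdot\ell)(\gamma)=m\cdot\ell(\gamma)$ and $\Delta_\alpha(\ell)(\gamma)=\ell(\alpha\gamma)$. An $M$-DFA is $A=(Q,\Sigma,u,i_u,\delta,w,\rho)$ with $Q$ finite nonempty, initial state $u$, initial value $i_u\in M$, $\delta:Q\times\Sigma\to Q$, $w:Q\times\Sigma\to M$, $\rho:Q\to M$. Write $q\alpha$ for the extended transition and $w^*(q,\varepsilon)=1$, $w^*(q,\alpha\sigma)=w^*(q,\alpha)\cdot w(q\alpha,\sigma)$. $A$ recognizes $\mathcal{A}(\alpha)=i_u\cdot w^*(u,\alpha)\cdot\rho(u\alpha)$. $A$ is accessible if $Q=\{u\alpha\mid\alpha\in\Sigma^*\}$; two $M$-DFAs are equivalent if they recognize the same $M$-language; $A$ is minimal if no equivalent $M$-DFA has fewer states. *)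

From mathcomp Require Import all_boot.
Set Implicit Arguments. Unset Strict Implicit. Unset Printing Implicit Defensive.

Definition is_monoid (M : Type) (mul : M -> M -> M) (one : M) : Prop :=
  (forall a b c, mul a (mul b c) = mul (mul a b) c) /\
  (forall a, mul one a = a) /\ (forall a, mul a one = a).

Definition mlang (Sigma M : Type) := seq Sigma -> M.

Definition mscale (Sigma M : Type) (mul : M -> M -> M) (m : M)
  (l : mlang Sigma M) : mlang Sigma M := fun g => mul m (l g).

Definition Delta (Sigma M : Type) (a : seq Sigma) (l : mlang Sigma M)
  : mlang Sigma M := fun g => l (a ++ g).

(* M-DFA (Q, Sigma, u, i_u, delta, w, rho); Q finite nonempty (u : Q). *)
Record MDFA (Sigma : finType) (M : Type) := {
  st : finType;
  init : st;
  ival : M;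
  delta : st -> Sigma -> st;
  wt : st -> Sigma -> M;
  rho : st -> M }.

Section Ext.
Variables (Sigma : finType) (M : Type) (mul : M -> M -> M) (one : M).
Variable A : MDFA Sigma M.

Definition dstar (q : st A) (a : seq Sigma) : st A := foldl (@delta _ _ A) q a.

(* w*(q, eps) = 1, w*(q, alpha sigma) = w*(q, alpha) . w(q alpha, sigma) *)
Fixpoint wstar_acc (p : st A) (m : M) (a : seq Sigma) : M :=
  match a with
  | [::] => m
  | s :: a' => wstar_acc (@delta _ _ A p s) (mul m (@wt _ _ A p s)) a'
  end.
Definition wstar (q : st A) (a : seq Sigma) : M := wstar_acc q one a.

Definition recog : mlang Sigma M :=
  fun a => mul (mul (@ival _ _ A) (wstar (@init _ _ A) a)) (@rho _ _ A (dstar (@init _ _ A) a)).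

Definition accessible : Prop :=
  forall q : st A, exists a : seq Sigma, dstar (@init _ _ A) a = q.
End Ext.

Definition equivalent (Sigma : finType) (M : Type) (mul : M -> M -> M) (one : M)
  (A B : MDFA Sigma M) : Prop := recog mul one A = recog mul one B.

Definition minimal (Sigma : finType) (M : Type) (mul : M -> M -> M) (one : M)
  (A : MDFA Sigma M) : Prop :=
  forall B : MDFA Sigma M, equivalent mul one B A -> #|st A| <= #|st B|.

From mathcomp Require Import all_boot.
From Stdlib Require Import FunctionalExtensionality.
Set Implicit Arguments. Unset Strict Implicit. Unset Printing Implicit Defensive.

(* After reading alpha, every M-DFA recognizing the language is in a state q
   and the residual is the scalar ival * w*(u, alpha) times the language
   recognized from q with initial value 1.  Map each state of A, via one of
   its access words, to the state an equivalent B reaches on that word: two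
   distinct states of A with the same image would give two residuals that are
   multiples of one common language, which the hypothesis forbids.  So the
   map is injective and B has at least as many states as A. *)

Section Residuals.
Variables (M : Type) (mul : M -> M -> M) (one : M) (Sigma : finType).
Hypothesis HM : is_monoid mul one.

Lemma dstar_cat (A : MDFA Sigma M) (q : st A) (a b : seq Sigma) :
  dstar q (a ++ b) = dstar (dstar q a) b.
Proof. exact: foldl_cat. Qed.

Lemma wstar_acc_cat (A : MDFA Sigma M) (a b : seq Sigma) (p : st A) (m : M) :
  wstar_acc mul p m (a ++ b) = wstar_acc mul (dstar p a) (wstar_acc mul p m a) b.
Proof. by elim: a p m => [|s a IH] p m //=. Qed.

Lemma wstar_accE (A : MDFA Sigma M) (a : seq Sigma) (p : st A) (m : M) :
  wstar_acc mul p m a = mul m (wstar mul one p a).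
Proof.
case: HM => [mulA [mul1m mulm1]]; rewrite /wstar.
elim: a p m => [|s a IH] p m /=; first by rewrite mulm1.
by rewrite IH (IH _ (mul one _)) mul1m mulA.
Qed.

Lemma wstar_cat (A : MDFA Sigma M) (q : st A) (a b : seq Sigma) :
  wstar mul one q (a ++ b) = mul (wstar mul one q a) (wstar mul one (dstar q a) b).
Proof. by rewrite {1}/wstar wstar_acc_cat wstar_accE. Qed.

Definition state_lang (A : MDFA Sigma M) (q : st A) : mlang Sigma M :=
  fun g => mul (wstar mul one q g) (rho (dstar q g)).

Lemma Delta_recog (A : MDFA Sigma M) (a : seq Sigma) :
  Delta a (recog mul one A) =
  mscale mul (mul (ival A) (wstar mul one (init A) a))
    (state_lang (dstar (init A) a)).
Proof.
case: HM => [mulA _]; apply: functional_extensionality => g.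
by rewrite /Delta /mscale /recog /state_lang wstar_cat dstar_cat !mulA.
Qed.

End Residuals.

Section Access.
Variables (Sigma : finType) (M : Type) (A : MDFA Sigma M).
Hypothesis accA : accessible A.

Let reachable (q : st A) : exists a : seq Sigma, dstar (init A) a == q.
Proof. by case: (accA q) => a <-; exists a. Qed.

Definition access_word (q : st A) : seq Sigma := xchoose (reachable q).

Lemma dstar_access_word (q : st A) : dstar (init A) (access_word q) = q.
Proof. exact/eqP/(xchooseP (reachable q)). Qed.

End Access.

Theorem mainTheorem9 (M : Type) (mul : M -> M -> M) (one : M)
  (HM : is_monoid mul one) (Sigma : finType) (A : MDFA Sigma M) :
  accessible A ->
  ~ (exists (a b : seq Sigma) (l' : mlang Sigma M) (m m' : M),
       dstar (init A) a <> dstar (init A) b /\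
       Delta a (recog mul one A) = mscale mul m l' /\
       Delta b (recog mul one A) = mscale mul m' l') ->
  minimal mul one A.
Proof.
move=> accA separated B eqBA.
pose f (q : st A) : st B := dstar (init B) (access_word accA q).
suff f_inj : injective f by exact: leq_card f_inj.
move=> q q' fqq'; apply/eqP/negPn/negP => neq_qq'; apply: separated.
exists (access_word accA q), (access_word accA q'),
  (state_lang mul one (f q)), (mul (ival B) (wstar mul one (init B) (access_word accA q))),
  (mul (ival B) (wstar mul one (init B) (access_word accA q'))).
rewrite !dstar_access_word -eqBA !Delta_recog //.
by split; [exact/eqP | split; rewrite -/(f _) // fqq'].
Qed.
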